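(* Let $D$ be a square-free integer with $D\equiv 2\pmod 4$, let $\mathbb{Z}[\sqrt{D}]=\{x+y\sqrt D:x,y\in\mathbb{Z}\}$, and let $p$ be a prime integer which is irreducible but not prime in $\mathbb{Z}[\sqrt{D}]$, with $p\equiv 3\pmod 4$. Let $z\in I_p(D)$ with $p+\lVert z\rVert/p\equiv 2\pmod 4$. Then $A(p,z)$ does not have property (CZ).
   Context: $\bar z$ is the conjugate and $\lVert z\rVert=z\bar z$ the norm. $I_p(D)$ is the set of all non-unit $z\in\mathbb{Z}[\sqrt{D}]$ such that $z\notin\langle p\rangle$ but there exists $m\notin\langle p\rangle$ with $zm\in\langle p\rangle$ (for such $z$, $p$ divides $\lVert z\rVert$). $A(p,z)=\begin{pmatrix} p & z\\ \bar z & \lVert z\rVert/p\end{pmatrix}$. A matrix $A(p,z)$ has property (CZ) if there exist $a,b,c\in\mathbb{Z}[\sqrt{D}]$ with $a(1-a)=bc$ such that $A(p,z)=\begin{pmatrix} a&b\\ c&1-a\end{pmatrix}\begin{pmatrix}\bar a&\bar c\\ \bar b&1-\bar a\end{pmatrix}$. *)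

From HB Require Import structures.
From mathcomp Require Import all_boot all_order all_algebra.
From mathcomp Require Import ring.
Set Implicit Arguments. Unset Strict Implicit. Unset Printing Implicit Defensive.
Import Order.TTheory GRing.Theory Num.Theory.
Local Open Scope ring_scope.

(* The ring Z[sqrt D] = { x + y sqrt D : x, y in Z }, as pairs (x, y). *)

Record zsqrt (D : int) := ZS { zre : int; zim : int }.

Section ZSqrt.
Variable D : int.
Local Notation R := (zsqrt D).

Definition zs_pair (z : R) := (zre z, zim z).
Definition pair_zs (p : int * int) : R := ZS D p.1 p.2.
Lemma zs_pairK : cancel zs_pair pair_zs. Proof. by case. Qed.
HB.instance Definition _ := Countable.copy R (can_type zs_pairK).

Lemma zs_eq (a b : R) : zre a = zre b -> zim a = zim b -> a = b.
Proof. by case: a => ? ?; case: b => ? ? /= -> ->. Qed.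

Definition zs0 : R := ZS D 0 0.
Definition zs1 : R := ZS D 1 0.
Definition zsopp (a : R) : R := ZS D (- zre a) (- zim a).
Definition zsadd (a b : R) : R := ZS D (zre a + zre b) (zim a + zim b).
(* (x + y sqrt D)(u + v sqrt D) = (xu + D yv) + (xv + yu) sqrt D *)
Definition zsmul (a b : R) : R :=
  ZS D (zre a * zre b + D * (zim a * zim b)) (zre a * zim b + zim a * zre b).

Lemma zsaddA : associative zsadd.
Proof. by move=> a b c; apply: zs_eq => /=; ring. Qed.
Lemma zsaddC : commutative zsadd.
Proof. by move=> a b; apply: zs_eq => /=; ring. Qed.
Lemma zsadd0 : left_id zs0 zsadd.
Proof. by move=> a; apply: zs_eq => /=; ring. Qed.
Lemma zsaddN : left_inverse zs0 zsopp zsadd.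
Proof. by move=> a; apply: zs_eq => /=; ring. Qed.

HB.instance Definition _ := GRing.isZmodule.Build R zsaddA zsaddC zsadd0 zsaddN.

Lemma zsmulA : associative zsmul.
Proof. by move=> a b c; apply: zs_eq => /=; ring. Qed.
Lemma zsmulC : commutative zsmul.
Proof. by move=> a b; apply: zs_eq => /=; ring. Qed.
Lemma zsmul1 : left_id zs1 zsmul.
Proof. by move=> a; apply: zs_eq => /=; ring. Qed.
Lemma zsmulDl : left_distributive zsmul zsadd.
Proof. by move=> a b c; apply: zs_eq => /=; ring. Qed.
Lemma zs1_neq0 : zs1 != zs0.
Proof. by []. Qed.

HB.instance Definition _ :=
  GRing.Zmodule_isComNzRing.Build R zsmulA zsmulC zsmul1 zsmulDl zs1_neq0.

Definition zconj (z : R) : R := ZS D (zre z) (- zim z).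

(* norm ||z|| = z * conj z = x^2 - D y^2, an (integer) element of Z[sqrt D];
   we record its integer value. *)
Definition znorm (z : R) : int := zre z ^+ 2 - D * zim z ^+ 2.

End ZSqrt.

Section RingDiv.
Variable R : comNzRingType.

Definition is_unit (u : R) : Prop := exists v : R, u * v = 1.

Definition rdvd (a b : R) : Prop := exists c : R, b = a * c.

Definition irreducible_elt (x : R) : Prop :=
  x != 0 /\ ~ is_unit x /\ (forall a b : R, x = a * b -> is_unit a \/ is_unit b).

Definition prime_elt (x : R) : Prop :=
  x != 0 /\ ~ is_unit x /\
  (forall a b : R, rdvd x (a * b) -> rdvd x a \/ rdvd x b).

End RingDiv.

Definition Ip (D : int) (p : nat) (z : zsqrt D) : Prop :=
  ~ is_unit z /\ ~ rdvd (p%:R : zsqrt D) z /\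
  exists m : zsqrt D, ~ rdvd (p%:R : zsqrt D) m /\ rdvd (p%:R : zsqrt D) (z * m).

Definition mx2 (R : Type) (a b c d : R) : 'M[R]_2 :=
  \matrix_(i < 2, j < 2)
    if i == 0 then (if j == 0 then a else b) else (if j == 0 then c else d).

Definition Amat (D : int) (p : nat) (z : zsqrt D) : 'M[zsqrt D]_2 :=
  mx2 (p%:R) z (zconj z) (((znorm z %/ p%:Z)%Z)%:~R).

Definition propCZ (D : int) (M : 'M[zsqrt D]_2) : Prop :=
  exists a b c : zsqrt D,
    a * (1 - a) = b * c /\
    M = mx2 a b c (1 - a) *m mx2 (zconj a) (zconj c) (zconj b) (1 - zconj a).

Definition squarefree_int (D : int) : Prop :=
  forall k : nat, (1 < k)%N -> ~~ (k ^ 2 %| `|D|)%N.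

(** Expanding (CZ) and taking real parts of the diagonal gives
    [p = N(a) + N(b)], [q = N(c) + N(1 - a)] with [q = ||z||/p], and the norm of
    [a (1 - a) = b c] gives [N(a) N(1 - a) = N(b) N(c)].  Eliminating [N(b)] and
    [N(c)] yields [p q = p N(1 - a) + q N(a)].  Since [D] is even,
    [N(a) + N(1 - a) = 1 + 2 x (x - 1) - 2 D y^2] (for [a = x + y sqrt D]) is
    [1] mod 4, so with [p = q = 3] mod 4 the identity reads [1 = 3] mod 4. *)
From mathcomp Require Import all_boot all_order all_algebra.
From mathcomp Require Import ring zify.
Set Implicit Arguments. Unset Strict Implicit. Unset Printing Implicit Defensive.
Import GRing.Theory Num.Theory.
Local Open Scope ring_scope.

Section ZSqrtNorm.
Variable D : int.
Implicit Types a b : zsqrt D.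

Lemma zreD a b : zre (a + b) = zre a + zre b. Proof. by []. Qed.
Lemma zre1 : zre (1 : zsqrt D) = 1. Proof. by []. Qed.

Lemma zre_natr n : zre (n%:R : zsqrt D) = n.
Proof. by elim: n => // n IHn; rewrite mulrS zreD IHn zre1 -addn1 PoszD addrC. Qed.

Lemma zre_intr k : zre (k%:~R : zsqrt D) = k.
Proof. by case: k => n; rewrite ?NegzE ?mulrNz /= zre_natr. Qed.

Lemma znormM a b : znorm (a * b) = znorm a * znorm b.
Proof. by rewrite /znorm /=; ring. Qed.

Lemma znorm_add_znorm_1subr_mod4 a :
  (2 %| D)%Z -> (znorm a + znorm (1 - a) = 1 %[mod 4])%Z.
Proof.
case/dvdzP=> d defD; rewrite /znorm /=.
move: (zre a) (zim a) => x y.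
have [k [->|->]] : exists k, x = k * 2 \/ x = k * 2 + 1 by exists (x %/ 2)%Z; lia.
all: by rewrite defD; nia.
Qed.

Lemma propCZ_diag_norms (M : 'M[zsqrt D]_2) :
  propCZ M -> exists a b c : zsqrt D,
    [/\ zre (M 0 0) = znorm a + znorm b,
         zre (M 1 1) = znorm c + znorm (1 - a)
       & znorm a * znorm (1 - a) = znorm b * znorm c].
Proof.
case=> a [b [c [abc ->]]]; exists a, b, c.
split; last by rewrite -!znormM abc.
all: by rewrite !mxE !big_ord_recl big_ord0 /mx2 !mxE /znorm /=; ring.
Qed.

End ZSqrtNorm.

Lemma no_crossed_splitting_3mod4 (p q a b c d : int) :
  p = a + b -> q = c + d -> a * d = b * c ->
  (a + d = 1 %[mod 4])%Z -> (p = 3 %[mod 4])%Z -> (q = 3 %[mod 4])%Z -> False.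
Proof.
move=> -> -> ad_bc.
have cross : (a + b) * (c + d) = (a + b) * d + (c + d) * a.
  apply/eqP; rewrite -subr_eq0; apply/eqP.
  by transitivity (b * c - a * d); [ring | rewrite ad_bc subrr].
nia.
Qed.

Theorem corollary3p8 (D : int) (p : nat) (z : zsqrt D) :
  squarefree_int D ->
  (D = 2 %[mod 4])%Z ->
  prime p ->
  irreducible_elt (p%:R : zsqrt D) ->
  ~ prime_elt (p%:R : zsqrt D) ->
  (p%:Z = 3 %[mod 4])%Z ->
  Ip p z ->
  (p%:Z + (znorm z %/ p%:Z)%Z = 2 %[mod 4])%Z ->
  ~ propCZ (Amat p z).
Proof.
move=> _ D2 _ _ _ p3 _ pq2 /propCZ_diag_norms [a [b [c []]]].
rewrite /Amat /mx2 !mxE /= zre_natr zre_intr => Ep Eq Enorm.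
have D_even : (2 %| D)%Z by apply/dvdzP; exists ((D %/ 4)%Z * 2 + 1); lia.
have q3 : ((znorm z %/ p%:Z)%Z = 3 %[mod 4])%Z by lia.
exact: no_crossed_splitting_3mod4 Ep Eq Enorm (znorm_add_znorm_1subr_mod4 a D_even) p3 q3.
Qed.
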